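(* Let $g(x)=(x+1)\ln(x+1)-x\ln x$ (entropy in nats of a thermal state with mean photon number $x$). For $\eta\in[1/2,1)$ and $N_S>0$ with $(1-\eta)N_S\ge 2$, \[ g(\eta N_S)-g((1-\eta)N_S)\ge \ln\eta-\ln(1-\eta)-\frac{1}{\eta(1-\eta)N_S}. \] Consequently, for $\epsilon>0$, choosing the photon-number-sharing parameter $\lambda=1/[\eta(1-\eta)\epsilon N_S\ln 2]$, whenever $\lambda(1-\eta)N_S\ge 2$ and $\eta\ge 1-\eta$, gives a quantum communication rate $g_2(\lambda\eta N_S)-g_2(\lambda(1-\eta)N_S)$ (in qubits per channel use) that is within $\epsilon$ of $\log_2\eta-\log_2(1-\eta)$, i.e. \[ g_2(\lambda\eta N_S)-g_2(\lambda(1-\eta)N_S)\ge \log_2\eta-\log_2(1-\eta)-\epsilon, \] where $g_2(x)=(x+1)\log_2(x+1)-x\log_2 x$.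
   Context: $\log_2\eta-\log_2(1-\eta)$ is the high-photon-number limit of the quantum communication rate $g_2(\eta N)-g_2((1-\eta)N)$ of a pure-loss bosonic channel with transmissivity $\eta$ and mean input photon number $N$. The photon-number-sharing parameter $\lambda$ is the fraction of the available mean photon number $N_S$ dedicated to quantum communication in a trade-off code. *)

From Stdlib Require Import Reals.
Open Scope R_scope.

Definition g (x : R) : R := (x + 1) * ln (x + 1) - x * ln x.

Definition log2 (x : R) : R := ln x / ln 2.

Definition g2 (x : R) : R := (x + 1) * log2 (x + 1) - x * log2 x.

From Stdlib Require Import Reals Lra.
Open Scope R_scope.

(* Writing g a = ln a + (a+1) ln (1 + 1/a), the elementary bounds
   1 - 1/y <= ln y <= y - 1 squeeze g a between ln a + 1 and ln a + 1 + 1/a.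
   Hence g (eta N) - g ((1-eta) N) loses at most 1/((1-eta) N) <= 1/(eta (1-eta) N)
   against ln (eta N) - ln ((1-eta) N) = ln eta - ln (1-eta).  For the rate in
   bits divide by ln 2 and apply this at the mean photon number lambda N_S, for
   which the error term 1/(eta (1-eta) lambda N_S ln 2) is exactly eps. *)

Lemma ln_le_sub1 y : 0 < y -> ln y <= y - 1.
Proof.
  intros Hy. pose proof (exp_ineq1_le (ln y)) as Hexp.
  rewrite exp_ln in Hexp; lra.
Qed.

Lemma ln_ge_1_sub_inv y : 0 < y -> 1 - / y <= ln y.
Proof.
  intros Hy. pose proof (ln_le_sub1 (/ y) (Rinv_0_lt_compat y Hy)) as H.
  rewrite ln_Rinv in H; lra.
Qed.

Lemma g_ln_ratio a : 0 < a -> g a = ln a + (a + 1) * ln ((a + 1) / a).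
Proof.
  intros Ha. unfold g, Rdiv.
  rewrite ln_mult, ln_Rinv by (try apply Rinv_0_lt_compat; lra).
  ring.
Qed.

Lemma g_ge_ln_add1 a : 0 < a -> ln a + 1 <= g a.
Proof.
  intros Ha. rewrite g_ln_ratio by exact Ha.
  assert (Hratio : 0 < (a + 1) / a) by (apply Rdiv_lt_0_compat; lra).
  pose proof (ln_ge_1_sub_inv _ Hratio) as Hln.
  replace (1 - / ((a + 1) / a)) with (/ (a + 1)) in Hln by (field; lra).
  apply Rmult_le_compat_l with (r := a + 1) in Hln; [|lra].
  rewrite Rinv_r in Hln by lra. lra.
Qed.

Lemma g_le_ln_add1_inv a : 0 < a -> g a <= ln a + 1 + / a.
Proof.
  intros Ha. rewrite g_ln_ratio by exact Ha.
  assert (Hratio : 0 < (a + 1) / a) by (apply Rdiv_lt_0_compat; lra).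
  pose proof (ln_le_sub1 _ Hratio) as Hln.
  apply Rmult_le_compat_l with (r := a + 1) in Hln; [|lra].
  replace ((a + 1) * ((a + 1) / a - 1)) with (1 + / a) in Hln by (field; lra).
  lra.
Qed.

Lemma g_sub_ge a b : 0 < a -> 0 < b -> ln a - ln b - / b <= g a - g b.
Proof.
  intros Ha Hb.
  pose proof (g_ge_ln_add1 a Ha). pose proof (g_le_ln_add1_inv b Hb). lra.
Qed.

Lemma g_sub_scaled_ge eta N : 0 < eta -> eta < 1 -> 0 < N ->
  ln eta - ln (1 - eta) - / (eta * (1 - eta) * N)
    <= g (eta * N) - g ((1 - eta) * N).
Proof.
  intros Heta0 Heta1 HN.
  assert (HetaN : 0 < eta * N) by nra.
  assert (HcoN : 0 < (1 - eta) * N) by nra.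
  pose proof (g_sub_ge _ _ HetaN HcoN) as Hsub.
  rewrite !ln_mult in Hsub by lra.
  assert (Hinv : / ((1 - eta) * N) <= / (eta * (1 - eta) * N)).
  { apply Rinv_le_contravar; nra. }
  lra.
Qed.

Lemma ln2_pos : 0 < ln 2.
Proof. rewrite <- ln_1. apply ln_increasing; lra. Qed.

Lemma g2_eq_g_div_ln2 x : g2 x = g x / ln 2.
Proof. pose proof ln2_pos. unfold g2, g, log2. field. lra. Qed.

Lemma g2_sub_scaled_ge eta N : 0 < eta -> eta < 1 -> 0 < N ->
  log2 eta - log2 (1 - eta) - / (eta * (1 - eta) * N * ln 2)
    <= g2 (eta * N) - g2 ((1 - eta) * N).
Proof.
  intros Heta0 Heta1 HN.
  pose proof ln2_pos as Hln2.
  pose proof (g_sub_scaled_ge eta N Heta0 Heta1 HN) as Hnats.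
  rewrite !g2_eq_g_div_ln2. unfold log2.
  replace (ln eta / ln 2 - ln (1 - eta) / ln 2 - / (eta * (1 - eta) * N * ln 2))
    with ((ln eta - ln (1 - eta) - / (eta * (1 - eta) * N)) / ln 2)
    by (field; repeat split; lra).
  unfold Rdiv. rewrite <- Rmult_minus_distr_r.
  apply Rmult_le_compat_r; [left; apply Rinv_0_lt_compat|]; lra.
Qed.

Theorem proposition3 :
  (forall eta NS : R,
     1 / 2 <= eta -> eta < 1 -> 0 < NS -> 2 <= (1 - eta) * NS ->
     g (eta * NS) - g ((1 - eta) * NS)
       >= ln eta - ln (1 - eta) - 1 / (eta * (1 - eta) * NS))
  /\
  (forall eta NS eps lambda : R,
     1 / 2 <= eta -> eta < 1 -> 0 < NS -> 0 < eps ->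
     lambda = 1 / (eta * (1 - eta) * eps * NS * ln 2) ->
     2 <= lambda * (1 - eta) * NS -> 1 - eta <= eta ->
     g2 (lambda * eta * NS) - g2 (lambda * (1 - eta) * NS)
       >= log2 eta - log2 (1 - eta) - eps).
Proof.
  split.
  - intros eta NS Heta0 Heta1 HNS _.
    apply Rle_ge. unfold Rdiv. rewrite Rmult_1_l.
    apply g_sub_scaled_ge; lra.
  - intros eta NS eps lambda Heta0 Heta1 HNS Heps Hlambda Hphotons _.
    pose proof ln2_pos as Hln2.
    assert (HlamNS : 0 < lambda * NS) by nra.
    assert (Herr : / (eta * (1 - eta) * (lambda * NS) * ln 2) = eps).
    { rewrite Hlambda. field. repeat split; lra. }
    apply Rle_ge.
    replace (lambda * eta * NS) with (eta * (lambda * NS)) by ring.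
    replace (lambda * (1 - eta) * NS) with ((1 - eta) * (lambda * NS)) by ring.
    rewrite <- Herr.
    apply g2_sub_scaled_ge; lra.
Qed.
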